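(* Let $\varepsilon>0$, $\beta\in(0,1)$ and let $G$ be a graph with at least one edge. Run the following randomized procedure: set $T=-\frac{4}{\varepsilon}\ln\frac{2}{\beta}$ and $\tilde T=T+\mathrm{Lap}(2/\varepsilon)$; for $\tau=1,2,3,\dots$ compute $\tilde Q_\tau=Q_{\mathrm{Del\text{-}Deg}}(G,\tau)+\mathrm{Lap}(2/\varepsilon)$ (fresh independent noise each time) and output the first $\tau$ with $\tilde Q_\tau>\tilde T$. Then with probability at least $1-\beta$, the output $\tau$ satisfies $\tau\le\deg(G)$ and $$|Q_{\mathrm{Del\text{-}Deg}}(G,\tau)|\le\frac{4}{\varepsilon}\ln\deg(G)+\frac{8}{\varepsilon}\ln\frac{2}{\beta}.$$
   Context: Graphs are finite, simple, undirected; $\deg_G(v)$ is the degree of $v$ and $\deg(G)$ the maximum degree. $Q_{\mathrm{Del\text{-}Deg}}(G,\tau)=-\tfrac12\sum_{v:\deg_G(v)\ge\tau}(\deg_G(v)-\tau)$. $\mathrm{Lap}(b)$ denotes a random variable with density $\frac{1}{2b}e^{-|x|/b}$; all Laplace draws are independent. *)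

From HB Require Import structures.
From mathcomp Require Import all_boot all_order all_algebra.
From mathcomp Require Import all_classical all_reals all_analysis.
Set Implicit Arguments.
Unset Strict Implicit.
Unset Printing Implicit Defensive.
Import Order.TTheory GRing.Theory Num.Theory.
Local Open Scope classical_set_scope.
Local Open Scope ring_scope.

Definition simple_graph (V : finType) (e : rel V) : Prop :=
  irreflexive e /\ symmetric e.

Definition deg (V : finType) (e : rel V) (v : V) : nat := #|[set u | e v u]|.

Definition maxdeg (V : finType) (e : rel V) : nat := \max_(v : V) deg e v.

Definition Q_del_deg (R : realType) (V : finType) (e : rel V) (tau : nat) : R :=
  - (1 / 2) * \sum_(v : V | (tau <= deg e v)%N) ((deg e v)%:R - tau%:R).

Definition laplace_pdf (R : realType) (b x : R) : R :=
  (2 * b)^-1 * expR (- `|x| / b).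

Definition is_laplace d (T : measurableType d) (R : realType) (P : probability T R)
    (X : {RV P >-> R}) (b : R) : Prop :=
  forall A : set R, measurable A ->
    distribution P X A = (\int[lebesgue_measure]_(x in A) (laplace_pdf b x)%:E)%E.

Definition mutually_independent d (T : measurableType d) (R : realType)
    (P : probability T R) (X : nat -> {RV P >-> R}) : Prop :=
  forall (J : seq nat), uniq J ->
  forall A : nat -> set R, (forall i, measurable (A i)) ->
    P (\bigcap_(i in [set j | j \in J]) (X i @^-1` A i))
    = (\prod_(i <- J) P (X i @^-1` A i))%E.

(** Noise: W 0 is the threshold noise, W tau (tau >= 1) is the noise of the
    tau-th query.  [svt_outputs ... w tau] says that on the noise outcome
    [w], the procedure outputs [tau], i.e. [tau] is the first [tau >= 1]
    with  Q(G,tau) + W tau > T + W 0,  where T = -(4/eps) ln(2/beta). *)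
Definition svt_threshold (R : realType) (eps beta : R) : R :=
  - (4 / eps) * ln (2 / beta).

Definition svt_outputs (R : realType) (V : finType) (e : rel V) (eps beta : R)
    (w : nat -> R) (tau : nat) : Prop :=
  let Tt := svt_threshold eps beta + w 0%N in
  [/\ (0 < tau)%N,
      (forall s : nat, (0 < s)%N -> (s < tau)%N -> Q_del_deg R e s + w s <= Tt)
    & Tt < Q_del_deg R e tau + w tau].

From HB Require Import structures.
From mathcomp Require Import all_boot all_order all_algebra.
From mathcomp Require Import all_classical all_reals all_analysis.
From mathcomp Require Import ring lra measurable_realfun.
Import Order.TTheory GRing.Theory Num.Theory.
Import numFieldNormedType.Exports.
Local Open Scope classical_set_scope.
Local Open Scope ring_scope.

(* Write D = deg(G), L = ln(2/beta), alpha = (2/eps) L and gamma = alpha + (4/eps) ln D,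
   so that the public threshold is -2 alpha.  A Lap(2/eps) variable exceeds alpha (or
   falls below -alpha) with probability beta/4 and exceeds gamma with probability
   beta/(4 D^2).  By the union bound, with probability at least 1 - beta the threshold
   noise lies in (-alpha, alpha), the noise of query D exceeds -alpha and the noise of
   each query 1..D stays below gamma.  Since Q(G, D) = 0, query D then beats the noisy
   threshold, so the output tau is at most D; and at tau,
   Q(G, tau) > -2 alpha + W_0 - W_tau > -3 alpha - gamma, which is the claimed bound
   because Q is nonpositive. *)

Section laplace_pdf.
Context {R : realType}.
Variable b : R.
Hypothesis b_gt0 : 0 < b.

Lemma laplace_pdf_ge0 x : 0 <= laplace_pdf b x.
Proof. by rewrite /laplace_pdf mulr_ge0 ?invr_ge0 ?mulr_ge0 ?expR_ge0 ?ltW. Qed.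

Lemma continuous_laplace_pdf : continuous (laplace_pdf b).
Proof.
move=> x; apply: cvgMl_tmp; apply: continuous_comp; last exact: continuous_expR.
by apply: cvgMr_tmp; apply: continuousN; exact: norm_continuous.
Qed.

Lemma laplace_pdfN x : laplace_pdf b (- x) = laplace_pdf b x.
Proof. by rewrite /laplace_pdf normrN. Qed.

(* On [0, +oo[ the Laplace density is half the exponential density of rate 1/b,
   whose antiderivative is x |-> - expR (- x / b). *)
Lemma integral_laplace_pdf_itvcy a : 0 <= a ->
  (\int[lebesgue_measure]_(x in `[a, +oo[) (laplace_pdf b x)%:E
    = (expR (- a / b) / 2)%:E)%E.
Proof.
move=> a_ge0.
pose F x : R := - expR (- b^-1 * x) / 2.
have cF : continuous F.
  move=> z; apply: cvgMr_tmp; apply: cvgN; apply: continuous_comp; last exact: continuous_expR.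
  by apply: cvgMl_tmp; exact: cvg_id.
rewrite (@ge0_continuous_FTC2y _ _ F a 0).
- rewrite /F -EFinB sub0r mulNr opprK.
  by rewrite [- a / b]mulrC mulrN mulNr.
- by move=> x _; exact: laplace_pdf_ge0.
- exact/continuous_subspaceT/continuous_laplace_pdf.
- rewrite /F -(mul0r (2^-1 : R)); apply: cvgMr_tmp.
  rewrite -oppr0; apply: cvgN.
  rewrite (_ : (fun x => expR (- b^-1 * x)) = (fun z => expR (- z)) \o ( *%R b^-1));
    last by apply: eq_fun => x; rewrite mulNr.
  apply: (@cvg_comp _ _ _ _ _ _ (pinfty_nbhs R)); last exact: cvgr_expR.
  by apply: gt0_cvgMry; rewrite ?invr_gt0.
- by move=> z _; exact: ex_derive.
- exact/cvg_at_right_filter/cF.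
- move=> z; rewrite in_itv/= andbT => az.
  have z_gt0 : 0 < z by apply: le_lt_trans az.
  rewrite /F (@derive1Mr _ (fun x => - expR (- b^-1 * x))); last exact: ex_derive.
  rewrite derive1_exponential_pdf; last by rewrite in_itv/= z_gt0.
  rewrite exponential_pdfE ?ltW// /laplace_pdf gtr0_norm// invfM.
  by rewrite [- z / b]mulrC mulrN mulNr; ring.
Qed.

Lemma integral_laplace_pdf_itvNyc a : 0 <= a ->
  (\int[lebesgue_measure]_(x in `]-oo, (- a)%R]) (laplace_pdf b x)%:E
    = (expR (- a / b) / 2)%:E)%E.
Proof.
move=> a_ge0; rewrite ge0_integration_by_substitutionNy.
- rewrite -integral_laplace_pdf_itvcy//; apply: eq_integral => x _ /=.
  by rewrite laplace_pdfN.
- exact/continuous_subspaceT/continuous_laplace_pdf.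
- by move=> x _; exact: laplace_pdf_ge0.
Qed.

End laplace_pdf.

Section laplace_tail.
Context {R : realType} {d} {T : measurableType d} {P : probability T R}.
Context {X : {RV P >-> R}} {b : R}.
Hypotheses (b_gt0 : 0 < b) (X_laplace : is_laplace X b).

Lemma laplace_tail_ge a : 0 <= a ->
  P (X @^-1` `[a, +oo[) = (expR (- a / b) / 2)%:E.
Proof. by move=> a_ge0; rewrite -integral_laplace_pdf_itvcy//; exact: X_laplace. Qed.

Lemma laplace_tail_le a : 0 <= a ->
  P (X @^-1` `]-oo, - a]) = (expR (- a / b) / 2)%:E.
Proof. by move=> a_ge0; rewrite -integral_laplace_pdf_itvNyc//; exact: X_laplace. Qed.

End laplace_tail.

Section measure_facts.
Context {d} {T : measurableType d} {R : realType}.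

Lemma measurable_ler (f g : T -> R) : measurable_fun setT f -> measurable_fun setT g ->
  measurable [set x | f x <= g x].
Proof.
move=> mf mg; rewrite -[X in measurable X]setTI.
by apply: (measurable_fun_ler mf mg measurableT).
Qed.

Lemma measurable_ltr (f g : T -> R) : measurable_fun setT f -> measurable_fun setT g ->
  measurable [set x | f x < g x].
Proof.
move=> mf mg; rewrite -[X in measurable X]setTI.
by apply: (measurable_fun_ltr mf mg measurableT).
Qed.

Lemma probability_ge_setC (P : probability T R) (A B : set T) (r : R) :
  measurable A -> measurable B -> (P A <= r%:E)%E -> ~` A `<=` B ->
  ((1 - r)%:E <= P B)%E.
Proof.
move=> mA mB PA_le AB; apply: (@le_trans _ _ (P (~` A))).
  by rewrite probability_setC// EFinB leeB.
by apply: le_measure => //; rewrite inE//; exact: measurableC.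
Qed.

End measure_facts.

Section del_deg.
Context {R : realType} {V : finType} {e : rel V}.

Lemma Q_del_deg_le0 tau : Q_del_deg R e tau <= 0.
Proof.
rewrite /Q_del_deg mulNr oppr_le0 mulr_ge0// sumr_ge0// => v tau_le.
by rewrite subr_ge0 ler_nat.
Qed.

Lemma Q_del_deg_maxdeg : Q_del_deg R e (maxdeg e) = 0.
Proof.
rewrite /Q_del_deg big1 ?mulr0// => v maxdeg_le.
have deg_le : (deg e v <= maxdeg e)%N by exact: leq_bigmax.
by rewrite (@anti_leq (deg e v) (maxdeg e)) ?subrr ?deg_le.
Qed.

Lemma maxdeg_gt0 u v : e u v -> (0 < maxdeg e)%N.
Proof.
move=> euv; apply: (@leq_trans (deg e u)); last exact: leq_bigmax.
by apply/card_gt0P; exists v; rewrite inE.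
Qed.

End del_deg.

Section svt_outputs.
Context {R : realType} {V : finType} {e : rel V} {eps beta : R} {w : nat -> R}.

Lemma svt_outputs_le n : (0 < n)%N ->
  svt_threshold eps beta + w 0%N < Q_del_deg R e n + w n ->
  exists2 tau, svt_outputs e eps beta w tau & (tau <= n)%N.
Proof.
move=> n_gt0 n_above.
pose above t := (0 < t)%N && (svt_threshold eps beta + w 0%N < Q_del_deg R e t + w t).
have : exists t, above t by exists n; rewrite /above n_gt0.
case/ex_minnP=> tau /andP[tau_gt0 tau_above] tau_min.
exists tau; last by apply: tau_min; rewrite /above n_gt0.
split=> // s s_gt0 s_lt; rewrite leNgt; apply/negP => s_above.
by have := tau_min s; rewrite /above s_gt0 s_above leqNgt s_lt => /(_ isT).
Qed.

Lemma svt_outputs_error tau : svt_outputs e eps beta w tau ->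
  `|Q_del_deg R e tau| < w tau - (svt_threshold eps beta + w 0%N).
Proof. by case=> _ _ tau_above; rewrite ler0_norm ?Q_del_deg_le0//; lra. Qed.

End svt_outputs.

Section svt_measurable.
Context {R : realType} {V : finType} (e : rel V) (eps beta : R).
Context {d} {T : measurableType d} {P : probability T R} (W : nat -> {RV P >-> R}).

Lemma measurable_svt_outputs tau :
  measurable [set om | svt_outputs e eps beta (fun i => W i om) tau].
Proof.
case: tau => [|tau].
  by rewrite (_ : [set _ | _] = set0)//; apply/seteqP; split=> om // [].
rewrite (_ : [set _ | _] = \bigcap_(s in [set s | (0 < s < tau.+1)%N])
    [set om | Q_del_deg R e s + W s om <= svt_threshold eps beta + W 0%N om]
  `&` [set om | svt_threshold eps beta + W 0%N om < Q_del_deg R e tau.+1 + W tau.+1 om]).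
  apply: measurableI; first apply: bigcap_measurableType => s _.
    by apply: measurable_ler; apply: measurable_funD.
  by apply: measurable_ltr; apply: measurable_funD.
apply/seteqP; split=> om /=.
  by case=> _ below above; split=> // s /andP[]; exact: below.
by case=> below above; split=> // s s_gt0 s_lt; apply: below; rewrite /= s_gt0.
Qed.

Lemma measurable_svt_outputs_such_that (p q : nat -> Prop) :
  measurable [set om | exists tau,
    [/\ svt_outputs e eps beta (fun i => W i om) tau, p tau & q tau]].
Proof.
rewrite (_ : [set _ | _] = \bigcup_(tau in [set t | p t /\ q t])
    [set om | svt_outputs e eps beta (fun i => W i om) tau]).
  by apply: bigcup_measurable => tau _; exact: measurable_svt_outputs.
apply/seteqP; split=> om /=.
  by case=> tau [out ptau qtau]; exists tau.
by case=> tau [ptau qtau] out; exists tau.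
Qed.

End svt_measurable.

Section svt_accuracy.
Context {R : realType} {V : finType} (e : rel V) (eps beta : R).
Context {d} {T : measurableType d} {P : probability T R} (W : nat -> {RV P >-> R}).
Hypotheses (eps_gt0 : 0 < eps) (beta_gt0 : 0 < beta) (beta_lt1 : beta < 1).
Hypothesis W_laplace : forall i, is_laplace (W i) (2 / eps).
Hypothesis maxdeg_gt0 : (0 < maxdeg e)%N.

Local Notation D := (maxdeg e).
Local Notation alpha := (2 / eps * ln (2 / beta)).
Local Notation gamma := (alpha + 4 / eps * ln D%:R).

Definition svt_bad_event : set T :=
  W 0%N @^-1` `[alpha, +oo[ `|` W 0%N @^-1` `]-oo, - alpha] `|` W D @^-1` `]-oo, - alpha]
  `|` \bigcup_(i in `I_D) W i.+1 @^-1` `[gamma, +oo[.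

Let measurable_noise_itv i (I : interval R) : measurable (W i @^-1` [set` I]).
Proof. by apply: measurable_funPTI; exact: measurable_itv. Qed.

Lemma measurable_svt_bad_event : measurable svt_bad_event.
Proof.
apply: measurableU; last exact: bigcup_measurable.
by apply: measurableU; first apply: measurableU.
Qed.

Let alpha_ge0 : 0 <= alpha.
Proof.
apply: mulr_ge0; first by rewrite divr_ge0 ?ltW.
by rewrite ln_ge0// ler_pdivlMr// mul1r (le_trans (ltW beta_lt1))// ler1n.
Qed.

Let gamma_ge0 : 0 <= gamma.
Proof. by rewrite addr_ge0// mulr_ge0 ?divr_ge0 ?ln_ge0 ?ler1n ?ltW. Qed.

Let svt_thresholdE : svt_threshold eps beta = - (2 * alpha).
Proof. by rewrite /svt_threshold; ring. Qed.

Let alpha_tail : expR (- alpha / (2 / eps)) / 2 = beta / 4.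
Proof.
rewrite (_ : - alpha / (2 / eps) = - ln (2 / beta)); last by field; rewrite gt_eqF.
by rewrite expRN lnK ?posrE ?divr_gt0//; field; rewrite gt_eqF.
Qed.

Let gamma_tail : expR (- gamma / (2 / eps)) / 2 = beta / 4 / D%:R ^+ 2.
Proof.
have D_gt0 : 0 < D%:R :> R by rewrite ltr0n.
rewrite (_ : - gamma / (2 / eps) = - ln (2 / beta) + - (2%:R * ln D%:R));
  last by field; rewrite gt_eqF.
rewrite expRD !expRN expRM_natl !lnK ?posrE ?divr_gt0//.
by field; rewrite !gt_eqF.
Qed.

Let measureU2_le {A B : set T} {a b : R} : (P A <= a%:E)%E -> (P B <= b%:E)%E ->
  measurable A -> measurable B -> (P (A `|` B) <= (a + b)%:E)%E.
Proof. by move=> PA PB mA mB; rewrite (le_trans (measureU2 P mA mB))// EFinD leeD. Qed.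

Lemma measure_svt_bad_event_le : (P svt_bad_event <= beta%:E)%E.
Proof.
have scale_gt0 : 0 < 2 / eps by rewrite divr_gt0.
have tail_ge i := laplace_tail_ge scale_gt0 (W_laplace i).
have tail_le i := laplace_tail_le scale_gt0 (W_laplace i).
have queries_le : (P (\bigcup_(i in `I_D) W i.+1 @^-1` `[gamma, +oo[) <= (beta / 4)%:E)%E.
  rewrite bigcup_mkord.
  apply: le_trans (Boole_inequality P (A := fun k => W k.+1 @^-1` `[gamma, +oo[) _) _ => //.
  rewrite (eq_bigr (fun=> (beta / 4 / D%:R ^+ 2)%:E)); last first.
    by move=> i _; rewrite -gamma_tail; exact: tail_ge.
  rewrite sumEFin sumr_const card_ord -[_ *+ D]mulr_natr lee_fin.
  have D_gt0 : 0 < D%:R :> R by rewrite ltr0n.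
  rewrite (_ : _ * D%:R = beta / 4 / D%:R); last by field; rewrite gt_eqF.
  by rewrite ler_pdivrMr// ler_peMr ?ler1n// divr_ge0 ?ltW.
have alpha_tail_ge i : (P (W i @^-1` `[alpha, +oo[) <= (beta / 4)%:E)%E.
  by rewrite tail_ge// alpha_tail.
have alpha_tail_le i : (P (W i @^-1` `]-oo, (- alpha)%R]) <= (beta / 4)%:E)%E.
  by rewrite tail_le// alpha_tail.
rewrite (_ : beta = beta / 4 + beta / 4 + beta / 4 + beta / 4); last by field.
apply: (measureU2_le _ queries_le); last 2 first.
- by apply: measurableU; first apply: measurableU.
- exact: bigcup_measurable.
apply: (measureU2_le _ (alpha_tail_le D)) => //; last exact: measurableU.
exact: measureU2_le.
Qed.

Lemma svt_accurate_off_bad om : ~ svt_bad_event om ->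
  exists tau, [/\ svt_outputs e eps beta (fun i => W i om) tau, (tau <= D)%N
    & `|Q_del_deg R e tau| <= 4 / eps * ln D%:R + 8 / eps * ln (2 / beta)].
Proof.
move=> off_bad.
have W0_lt : W 0%N om < alpha.
  by rewrite ltNge; apply/negP => ge; apply: off_bad; do 3 left; rewrite /= in_itv/= ge.
have W0_gt : - alpha < W 0%N om.
  by rewrite ltNge; apply/negP => le; apply: off_bad; do 2 left; right; rewrite /= in_itv/= le.
have WD_gt : - alpha < W D om.
  by rewrite ltNge; apply/negP => le; apply: off_bad; left; right; rewrite /= in_itv/= le.
have query_lt t : (0 < t)%N -> (t <= D)%N -> W t om < gamma.
  move=> t_gt0 t_le; rewrite ltNge; apply/negP => ge; apply: off_bad; right.
  by exists t.-1; rewrite /= prednK// in_itv/= ge.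
have [tau out tau_le] : exists2 tau, svt_outputs e eps beta (fun i => W i om) tau & (tau <= D)%N.
  apply: svt_outputs_le => //.
  by rewrite Q_del_deg_maxdeg add0r svt_thresholdE; move: W0_lt WD_gt; lra.
exists tau; split=> //.
have [tau_gt0 _ _] := out.
move: out (query_lt tau tau_gt0 tau_le) W0_gt => /svt_outputs_error.
rewrite svt_thresholdE; lra.
Qed.

End svt_accuracy.

Theorem mainTheorem3 (R : realType) (V : finType) (e : rel V) (eps beta : R)
    (d : measure_display) (T : measurableType d) (P : probability T R)
    (W : nat -> {RV P >-> R}) :
  simple_graph e -> (exists u v : V, e u v) ->
  0 < eps -> 0 < beta -> beta < 1 ->
  mutually_independent W ->
  (forall i : nat, is_laplace (W i) (2 / eps)) ->
  ((1 - beta)%:E <=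
     P [set om : T | exists tau : nat,
          [/\ svt_outputs e eps beta (fun i => W i om) tau,
              (tau <= maxdeg e)%N
            & (`|Q_del_deg R e tau|
                <= 4 / eps * ln (maxdeg e)%:R + 8 / eps * ln (2 / beta))%R]])%E.
Proof.
move=> _ [u [v /maxdeg_gt0 maxdeg_gt0]] eps_gt0 beta_gt0 beta_lt1 _ W_laplace.
apply: (probability_ge_setC P (svt_bad_event e eps beta W)).
- exact: measurable_svt_bad_event.
- exact: measurable_svt_outputs_such_that.
- exact: measure_svt_bad_event_le.
- by move=> om off_bad; exact: svt_accurate_off_bad off_bad.
Qed.
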